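(* Let $q \in \mathbb{N}$. (a) For $\psi \in \mathcal{D}^q$ and $i=1,\dots, I$, it holds that $\phi_i \in \mathcal{C}^{\uparrow,q }$ and $\phi_i' (u) >0$ for all $u \in \mathbb{R}_+$. (b) For $\bar{\psi } \in \bar{\mathcal{D}}^q$, it holds that $\gamma_i \in \mathcal{C}^{\uparrow,q}$ for $i=0,1,\dots,I$, and $\gamma_0' (z)>0$ for all $z \in \mathbb{R}_+$. (c) The map $\Upsilon$ is a bijection from $\mathcal{D}^q$ to $\bar{\mathcal{D}}^q$.
   Context: Fix $I\in\mathbb{N}$. $\mathcal{C}=\{f\in C(\mathbb{R}_+,\mathbb{R}_+):f(0)=0,f\text{ non-decreasing}\}$, $\mathcal{C}^\uparrow=\{f\in\mathcal{C}:f\text{ strictly increasing},\lim_{u\to\infty}f(u)=\infty\}$. For $f:\mathbb{R}_+\to\mathbb{R}$, $f^{\mathbb{R}}$ extends $f$ by $0$ on $(-\infty,0)$ and $f^{\mathbb{R},\uparrow}$ extends $f$ by $u\mapsto u$ on $(-\infty,0)$; $\mathcal{C}^q=\{f\in\mathcal{C}:f^{\mathbb{R}}\in C^q(\mathbb{R},\mathbb{R})\}$, $\mathcal{C}^{\uparrow,q}=\{f\in\mathcal{C}^\uparrow:f^{\mathbb{R},\uparrow}\in C^q(\mathbb{R},\mathbb{R})\}$. For $\psi\in\mathcal{C}^I$, $\phi_i(u)=u-\sum_{j=1}^I2(i\wedge j)\psi_j(u)$. $\mathcal{D}=\{\psi\in\mathcal{C}^I:\phi_I\in\mathcal{C}^\uparrow,\sum_{i}i\sup_{u_1\ne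 u_2}\frac{\psi_i(u_1)-\psi_i(u_2)}{\phi_i(u_1)-\phi_i(u_2)}<\frac12\}$ (each $\phi_i\in\mathcal{C}^\uparrow$ then), $\bar{\mathcal{D}}=\{\bar\psi\in\mathcal{C}^I:\sum_ii\sup_{z_1\ne z_2}\frac{\bar\psi_i(z_1)-\bar\psi_i(z_2)}{z_1-z_2}<\frac12\}$, $\mathcal{D}^q=\mathcal{D}\cap(\mathcal{C}^q)^I$, $\bar{\mathcal{D}}^q=\bar{\mathcal{D}}\cap(\mathcal{C}^q)^I$. $\Upsilon(\psi)_i=\psi_i\circ\phi_i^{-1}$. For $\bar\psi\in\mathcal{C}^I$: $\gamma_I(z)=z$, $\gamma_i(z)=z+\sum_{j>i}2(j-i)\bar\psi_j(\gamma_j(z))$ for $i=I-1,\dots,0$. *)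

From Stdlib Require Import Reals List Arith ClassicalEpsilon.
From Coquelicot Require Import Coquelicot.
Open Scope R_scope.

(* Functions on R_+ are represented by functions R -> R; only their values on
   [0, +oo) matter. *)

Definition ext0 (f : R -> R) (u : R) : R := if Rle_dec 0 u then f u else 0.
Definition extup (f : R -> R) (u : R) : R := if Rle_dec 0 u then f u else u.

Definition Cq (q : nat) (g : R -> R) : Prop :=
  (forall k x, (k < q)%nat -> ex_derive (Derive_n g k) x) /\
  (forall x, continuous (Derive_n g q) x).

Definition inC (f : R -> R) : Prop :=
  (forall u, 0 <= u ->
     filterlim f (within (fun y => 0 <= y) (locally u)) (locally (f u))) /\
  (forall u, 0 <= u -> 0 <= f u) /\
  f 0 = 0 /\
  (forall u1 u2, 0 <= u1 -> u1 <= u2 -> f u1 <= f u2).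

Definition inCup (f : R -> R) : Prop :=
  inC f /\
  (forall u1 u2, 0 <= u1 -> u1 < u2 -> f u1 < f u2) /\
  (forall M, exists U, forall u, U <= u -> M <= f u).

Definition inCq (q : nat) (f : R -> R) : Prop := inC f /\ Cq q (ext0 f).
Definition inCupq (q : nat) (f : R -> R) : Prop := inCup f /\ Cq q (extup f).

Definition sum1 (n : nat) (F : nat -> R) : R := fold_right Rplus 0 (map F (seq 1 n)).

(* families psi = (psi_1,...,psi_I) are functions nat -> (R -> R); only the
   indices 1..I matter *)
Definition phi (I : nat) (psi : nat -> R -> R) (i : nat) (u : R) : R :=
  u - sum1 I (fun j => 2 * INR (Nat.min i j) * psi j u).

Definition supratio (f g : R -> R) : Rbar :=
  Lub_Rbar (fun r => exists u1 u2, 0 <= u1 /\ 0 <= u2 /\ u1 <> u2 /\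
                                   r = (f u1 - f u2) / (g u1 - g u2)).

Definition weighted_small (I : nat) (S : nat -> Rbar) : Prop :=
  (forall i, (1 <= i <= I)%nat -> is_finite (S i)) /\
  sum1 I (fun i => INR i * real (S i)) < 1 / 2.

Definition inCI (I : nat) (psi : nat -> R -> R) : Prop :=
  forall i, (1 <= i <= I)%nat -> inC (psi i).
Definition inCqI (q I : nat) (psi : nat -> R -> R) : Prop :=
  forall i, (1 <= i <= I)%nat -> inCq q (psi i).

Definition inD (I : nat) (psi : nat -> R -> R) : Prop :=
  inCI I psi /\ inCup (phi I psi I) /\
  weighted_small I (fun i => supratio (psi i) (phi I psi i)).

Definition inDbar (I : nat) (psib : nat -> R -> R) : Prop :=
  inCI I psib /\ weighted_small I (fun i => supratio (psib i) (fun z => z)).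

Definition inDq (q I : nat) (psi : nat -> R -> R) : Prop := inD I psi /\ inCqI q I psi.
Definition inDbarq (q I : nat) (psib : nat -> R -> R) : Prop :=
  inDbar I psib /\ inCqI q I psib.

(* inverse on R_+ of f : R_+ -> R_+ (meaningful when f is a bijection of R_+) *)
Definition finv (f : R -> R) (z : R) : R :=
  epsilon (inhabits 0) (fun u => 0 <= u /\ f u = z).

Definition Ups (I : nat) (psi : nat -> R -> R) (i : nat) (z : R) : R :=
  psi i (finv (phi I psi i) z).

(* gamma: G n k = gamma_{I-k} for k <= n *)
Fixpoint Gam (I : nat) (psib : nat -> R -> R) (n : nat) : nat -> R -> R :=
  match n with
  | O => fun _ z => z
  | S m => fun k z =>
      if Nat.leb k m then Gam I psib m k z
      else z + fold_right Rplus 0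
             (map (fun k' => 2 * INR (S m - k') * psib (I - k')%nat (Gam I psib m k' z))
                  (seq 0 (S m)))
  end.

(* gamma_I(z) = z,
   gamma_i(z) = z + sum_{j>i} 2(j-i) psib_j(gamma_j(z)),  0 <= i <= I *)
Definition gamma (I : nat) (psib : nat -> R -> R) (i : nat) (z : R) : R :=
  Gam I psib (I - i) (I - i) z.

Definition feq (I : nat) (f g : nat -> R -> R) : Prop :=
  forall i, (1 <= i <= I)%nat -> forall u, 0 <= u -> f i u = g i u.

From Stdlib Require Import Reals.
From Coquelicot Require Import Coquelicot.
From Stdlib Require Import Ranalysis5 Lra Lia List FunctionalExtensionality ClassicalEpsilon.
Open Scope R_scope.
Set Bullet Behavior "Strict Subproofs".

(* The extensions [extup phi_i] and [extup gamma_i] are expanding: they increase at least at a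
   fixed rate c > 0.  For phi_i, c = 1 - 2 sum_j j L_j, where L_j is the supremum of the
   difference quotients of psi_j with respect to phi_j: psi_j grows at most L_j times as fast
   as phi_j, which itself grows at most at rate 1.  For gamma_i, c = 1, by downward induction
   on i.  An expanding C^q function has a positive derivative and a C^q inverse, so
   Upsilon(psi)_i = psi_i o phi_i^-1 is C^q, and reparametrising by phi_i turns the quotients
   of psi_i over phi_i into those of Upsilon(psi)_i over the identity.  Since phi_0 = id and
   phi_i = gamma_i o phi_I for gamma built from Upsilon(psi), psi is determined by
   Upsilon(psi) through phi_I = gamma_0^-1; conversely psi_i = psib_i o gamma_i o gamma_0^-1
   is a preimage of psib. *)

(** * Functions of class C^k on R *)

Fixpoint Ck (k : nat) (f : R -> R) : Prop :=
  match k with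
  | O => forall x, continuous f x
  | S k => (forall x, ex_derive f x) /\ Ck k (Derive f)
  end.

Lemma Derive_n_Derive f n : Derive_n (Derive f) n = Derive_n f (S n).
Proof.
  apply functional_extensionality; intro x.
  rewrite <- Nat.add_1_r. exact (Derive_n_comp f n 1 x).
Qed.

Lemma Ck_Cq k f : Ck k f <-> Cq k f.
Proof.
  revert f; induction k as [|k IH]; intro f; unfold Cq; simpl; split.
  - intro H; split; [intros; lia | exact H].
  - intros [_ H]; exact H.
  - intros [Hd Hk]. apply IH in Hk. destruct Hk as [Hk1 Hk2]. split.
    + intros [|n] x Hn; simpl; auto.
      change (ex_derive (Derive_n f (S n)) x).
      rewrite <- Derive_n_Derive. apply Hk1; lia.
    + intro x. change (continuous (Derive_n f (S k)) x).
      rewrite <- Derive_n_Derive. apply Hk2.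
  - intros [Hd Hc]. split.
    + intro x; apply (Hd 0%nat); lia.
    + apply IH. split.
      * intros n x Hn. rewrite Derive_n_Derive. apply Hd; lia.
      * intro x. rewrite Derive_n_Derive. apply Hc.
Qed.

Lemma Ck_ext k f g : (forall x, f x = g x) -> Ck k f -> Ck k g.
Proof. intro H; replace g with f; auto. now apply functional_extensionality. Qed.

Lemma Ck_continuous k f : Ck k f -> forall x, continuous f x.
Proof.
  destruct k; simpl; auto.
  intros [H _] x. exact (@ex_derive_continuous R_AbsRing R_NormedModule f x (H x)).
Qed.

Lemma Ck_S k f : Ck (S k) f -> Ck k f.
Proof.
  revert f; induction k as [|k IH]; intros f H.
  - exact (Ck_continuous 1 f H).
  - destruct H as [H1 H2]. split; auto.
Qed.

Lemma Ck_const k c : Ck k (fun _ => c).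
Proof.
  revert c; induction k as [|k IH]; simpl; intro c.
  - intros; apply continuous_const.
  - split; [intros; apply ex_derive_const|].
    apply Ck_ext with (fun _ => 0); auto. intros; now rewrite Derive_const.
Qed.

Lemma Ck_id k : Ck k (fun x => x).
Proof.
  destruct k; simpl.
  - intros; apply continuous_id.
  - split; [intros; apply ex_derive_id|].
    apply Ck_ext with (fun _ => 1); [intros; now rewrite Derive_id | apply Ck_const].
Qed.

Lemma Ck_plus k f g : Ck k f -> Ck k g -> Ck k (fun x => f x + g x).
Proof.
  revert f g; induction k as [|k IH]; simpl; intros f g Hf Hg.
  - intro x; apply (continuous_plus f g); auto.
  - destruct Hf as [Hf1 Hf2], Hg as [Hg1 Hg2]. split.
    + intro x; apply (ex_derive_plus f g); auto.
    + apply Ck_ext with (fun x => Derive f x + Derive g x); auto.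
      intro x; rewrite Derive_plus; auto.
Qed.

Lemma Ck_scal k c f : Ck k f -> Ck k (fun x => c * f x).
Proof.
  revert f; induction k as [|k IH]; simpl; intros f Hf.
  - intro x; apply (continuous_mult (fun _ => c) f); auto. apply continuous_const.
  - destruct Hf as [Hf1 Hf2]. split.
    + intro x; apply ex_derive_scal; auto.
    + apply Ck_ext with (fun x => c * Derive f x); auto.
      intro x; rewrite Derive_scal; auto.
Qed.

Lemma Ck_mult k f g : Ck k f -> Ck k g -> Ck k (fun x => f x * g x).
Proof.
  revert f g; induction k as [|k IH]; simpl; intros f g Hf Hg.
  - intro x; apply (continuous_mult f g); auto.
  - pose proof (Ck_S _ _ Hf) as Hf'. pose proof (Ck_S _ _ Hg) as Hg'.
    destruct Hf as [Hf1 Hf2], Hg as [Hg1 Hg2]. split.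
    + intro x; apply ex_derive_mult; auto.
    + apply Ck_ext with (fun x => Derive f x * g x + f x * Derive g x).
      * intro x; rewrite Derive_mult; auto.
      * apply Ck_plus; apply IH; auto.
Qed.

Lemma Ck_comp k f g : Ck k f -> Ck k g -> Ck k (fun x => f (g x)).
Proof.
  revert f g; induction k as [|k IH]; simpl; intros f g Hf Hg.
  - intro x; apply (continuous_comp g f); auto.
  - pose proof (Ck_S _ _ Hg) as Hg'.
    destruct Hf as [Hf1 Hf2], Hg as [Hg1 Hg2]. split.
    + intro x; apply ex_derive_comp; auto.
    + apply Ck_ext with (fun x => Derive g x * Derive f (g x)).
      * intro x; symmetry; apply Derive_comp; auto.
      * apply Ck_mult; auto.
Qed.

Lemma Ck_inv k h : Ck k h -> (forall x, h x <> 0) -> Ck k (fun x => / h x).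
Proof.
  revert h; induction k as [|k IH]; simpl; intros h Hh Hnz.
  - intro x. apply (continuous_comp h (fun y => / y)); auto.
    apply (@ex_derive_continuous R_AbsRing R_NormedModule).
    apply (ex_derive_inv (fun y => y)); auto. apply ex_derive_id.
  - pose proof (Ck_S _ _ Hh) as Hh'. destruct Hh as [H1 H2]. split.
    + intro x; apply ex_derive_inv; auto.
    + apply Ck_ext with (fun x => (-1 * Derive h x) * (/ h x * / h x)).
      * intro x; rewrite Derive_inv; auto. field. auto.
      * apply Ck_mult; [apply Ck_scal; auto | apply Ck_mult; apply IH; auto].
Qed.

Section InverseFunction.

Variables g h : R -> R.
Hypotheses (g_incr : strict_increasing g)
  (g_h : forall x, g (h x) = x) (h_g : forall x, h (g x) = x).

Lemma inverse_strict_increasing : strict_increasing h.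
Proof.
  intros x y Hxy. destruct (Rlt_le_dec (h x) (h y)) as [|H]; auto.
  destruct (Rle_lt_or_eq_dec _ _ H) as [H'|H'].
  - apply g_incr in H'. rewrite !g_h in H'. lra.
  - apply (f_equal g) in H'. rewrite !g_h in H'. lra.
Qed.

Lemma inverse_le x y : x <= y -> h x <= h y.
Proof.
  intros [Hxy|<-]; [apply Rlt_le, inverse_strict_increasing, Hxy | apply Rle_refl].
Qed.

Lemma inverse_continuous : (forall x, continuous g x) -> forall z, continuous h z.
Proof.
  intros Hc z. apply continuity_pt_filterlim.
  apply (continuity_pt_recip_interv g h (h z - 1) (h z + 1)); try lra.
  - intros x y _ Hxy _; apply g_incr, Hxy.
  - intros x _ _; apply g_h.
  - intros x H1 H2. rewrite <- (h_g (h z - 1)), <- (h_g (h z + 1)).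
    split; apply inverse_le; assumption.
  - intros a _. apply continuity_pt_filterlim, Hc.
  - assert (H : g (h z - 1) < g (h z) < g (h z + 1)) by (split; apply g_incr; lra).
    rewrite g_h in H. exact H.
Qed.

Lemma is_derive_inverse : (forall x, ex_derive g x) -> (forall x, 0 < Derive g x) ->
  forall z, is_derive h z (/ Derive g (h z)).
Proof.
  intros Hd Hpos z.
  assert (Prf : forall a, h (z - 1) <= a <= h (z + 1) -> derivable_pt g a)
    by (intros a _; apply ex_derive_Reals_0; auto).
  assert (Hz : h (z - 1) <= h z <= h (z + 1)) by (split; apply inverse_le; lra).
  assert (E : derive_pt g (h z) (Prf (h z) Hz) = Derive g (h z)).
  { apply derive_pt_eq_0, is_derive_Reals, Derive_correct; auto. }
  apply is_derive_Reals.
  replace (/ Derive g (h z)) with (1 / derive_pt g (h z) (Prf (h z) Hz))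
    by (rewrite E; unfold Rdiv; ring).
  apply derivable_pt_lim_recip_interv; try lra.
  - apply continuity_pt_filterlim, inverse_continuous.
    intro x; apply (@ex_derive_continuous R_AbsRing R_NormedModule), Hd.
  - intros x _; apply g_h.
  - rewrite E. specialize (Hpos (h z)). lra.
Qed.

Lemma Ck_inverse k : Ck (S k) g -> (forall x, 0 < Derive g x) -> Ck (S k) h.
Proof.
  intros Hg Hpos. revert Hg; induction k as [|k IH]; intro Hg;
    [assert (Hh : Ck 0 h) by exact (inverse_continuous (Ck_continuous 1 g Hg))
    |assert (Hh : Ck (S k) h) by (apply IH, Ck_S, Hg)];
    destruct Hg as [Hg1 Hg2]; split.
  1,3: intro z; eexists; apply is_derive_inverse; auto.
  all: apply Ck_ext with (fun z => / Derive g (h z));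
    [intro z; symmetry; apply is_derive_unique, is_derive_inverse; auto
    |apply Ck_inv; [apply Ck_comp; auto | intro x; specialize (Hpos (h x)); lra]].
Qed.

End InverseFunction.

Lemma Ck_ex_derive k f : (1 <= k)%nat -> Ck k f -> forall x, ex_derive f x.
Proof. destruct k; [lia|]. intros _ [H _]; exact H. Qed.

Definition sum_list (l : list nat) (F : nat -> R) : R := fold_right Rplus 0 (map F l).

Lemma sum1_sum_list I F : sum1 I F = sum_list (seq 1 I) F.
Proof. reflexivity. Qed.

Lemma sum_list_ext l F G : (forall j, In j l -> F j = G j) -> sum_list l F = sum_list l G.
Proof.
  induction l as [|a l IH]; simpl; intro H; auto.
  unfold sum_list in *; simpl. rewrite H, IH; auto.
Qed.

Lemma sum_list_plus l F G : sum_list l (fun j => F j + G j) = sum_list l F + sum_list l G.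
Proof. induction l as [|a l IH]; unfold sum_list in *; simpl; [lra|]. rewrite IH; lra. Qed.

Lemma sum_list_scal l c F : sum_list l (fun j => c * F j) = c * sum_list l F.
Proof. induction l as [|a l IH]; unfold sum_list in *; simpl; [lra|]. rewrite IH; lra. Qed.

Lemma sum_list_minus l F G : sum_list l (fun j => F j - G j) = sum_list l F - sum_list l G.
Proof.
  rewrite (sum_list_ext _ _ (fun j => F j + (-1) * G j)) by (intros; lra).
  rewrite sum_list_plus, sum_list_scal; lra.
Qed.

Lemma sum_list_le l F G : (forall j, In j l -> F j <= G j) -> sum_list l F <= sum_list l G.
Proof.
  induction l as [|a l IH]; unfold sum_list in *; simpl; intro H; [lra|].
  pose proof (H a (or_introl eq_refl)). pose proof (IH (fun j Hj => H j (or_intror Hj))). lra.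
Qed.

Lemma sum_list_zero l F : (forall j, In j l -> F j = 0) -> sum_list l F = 0.
Proof.
  induction l as [|a l IH]; unfold sum_list in *; simpl; intro H; [lra|].
  rewrite H, IH; auto. lra.
Qed.

Lemma sum_list_app l1 l2 F : sum_list (l1 ++ l2) F = sum_list l1 F + sum_list l2 F.
Proof. induction l1 as [|a l IH]; unfold sum_list in *; simpl; [lra|]. rewrite IH; lra. Qed.

Lemma Ck_sum_list k l F :
  (forall j, In j l -> Ck k (F j)) -> Ck k (fun x => sum_list l (fun j => F j x)).
Proof.
  induction l as [|a l IH]; unfold sum_list in *; simpl; intro H.
  - apply Ck_const.
  - apply Ck_plus; auto.
Qed.

Lemma in_seq1 I j : In j (seq 1 I) -> (1 <= j <= I)%nat.
Proof. intro H; apply in_seq in H; lia. Qed.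

Lemma sum_list_indicator I c a : (1 <= c <= I)%nat ->
  sum_list (seq 1 I) (fun j => if Nat.eqb j c then a else 0) = a.
Proof.
  induction I as [|I IH]; intro Hc; [lia|].
  rewrite seq_S, sum_list_app. unfold sum_list at 2; simpl.
  destruct (Nat.eq_dec c (S I)) as [->|Hne].
  - rewrite Nat.eqb_refl, sum_list_zero; [lra|].
    intros j Hj; apply in_seq in Hj. destruct (Nat.eqb_spec j (S I)); [lia | auto].
  - destruct c as [|c]; [lia|].
    replace (Nat.eqb I c) with false by (symmetry; apply Nat.eqb_neq; lia).
    rewrite IH by lia. lra.
Qed.

Lemma sum_list_seq_rev I k F : (k <= I)%nat ->
  sum_list (seq 0 k) (fun k' => F (I - k')%nat) =
  sum_list (seq 1 I) (fun j => if Nat.ltb (I - k) j then F j else 0).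
Proof.
  induction k as [|k IH]; intro Hk.
  - unfold sum_list at 1; simpl. symmetry; apply sum_list_zero.
    intros j Hj; apply in_seq in Hj. destruct (Nat.ltb_spec (I - 0) j); [lia | auto].
  - rewrite seq_S, sum_list_app, IH by lia. unfold sum_list at 2; simpl.
    rewrite <- (sum_list_indicator I (I - k) (F (I - k)%nat)) by lia.
    rewrite Rplus_0_r, <- sum_list_plus. apply sum_list_ext. intros j Hj; apply in_seq in Hj.
    destruct (Nat.ltb_spec (I - S k) j), (Nat.ltb_spec (I - k) j), (Nat.eqb_spec j (I - k));
      subst; try lia; lra.
Qed.

Lemma ext0_pos f u : 0 <= u -> ext0 f u = f u.
Proof. intro; unfold ext0; destruct (Rle_dec 0 u); auto; lra. Qed.
Lemma ext0_neg f u : u < 0 -> ext0 f u = 0.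
Proof. intro; unfold ext0; destruct (Rle_dec 0 u); auto; lra. Qed.
Lemma extup_pos f u : 0 <= u -> extup f u = f u.
Proof. intro; unfold extup; destruct (Rle_dec 0 u); auto; lra. Qed.
Lemma extup_neg f u : u < 0 -> extup f u = u.
Proof. intro; unfold extup; destruct (Rle_dec 0 u); auto; lra. Qed.

Lemma inC_intro f g : (forall u, 0 <= u -> f u = g u) -> (forall u, continuous g u) ->
  (forall u, 0 <= u -> 0 <= f u) -> f 0 = 0 ->
  (forall u1 u2, 0 <= u1 -> u1 <= u2 -> f u1 <= f u2) -> inC f.
Proof.
  intros Hfg Hc Hnn H0 Hmono. repeat split; auto.
  intros u Hu P HP. rewrite Hfg in HP by auto. specialize (Hc u P HP).
  unfold filtermap, within in *. apply (filter_imp (fun y => P (g y))); auto.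
  intros y Hy Hy0. rewrite Hfg; auto.
Qed.

Lemma inCq_intro q f : Ck q (ext0 f) -> f 0 = 0 -> (forall u, 0 <= u -> 0 <= f u) ->
  (forall u1 u2, 0 <= u1 -> u1 <= u2 -> f u1 <= f u2) -> inCq q f.
Proof.
  intros Hq H0 Hnn Hmono. split; [|apply Ck_Cq, Hq].
  apply inC_intro with (ext0 f); auto.
  - intros; symmetry; apply ext0_pos; auto.
  - exact (Ck_continuous q _ Hq).
Qed.

Lemma ext0_le f : inC f -> forall x y, x <= y -> ext0 f x <= ext0 f y.
Proof.
  intros [_ [Hnn [_ Hmono]]] x y Hxy. unfold ext0.
  destruct (Rle_dec 0 x), (Rle_dec 0 y); auto; lra.
Qed.

Lemma supratio_ge f g x y : is_finite (supratio f g) -> 0 <= x -> 0 <= y -> x <> y ->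
  (f x - f y) / (g x - g y) <= real (supratio f g).
Proof.
  intros Hfin Hx Hy Hxy. unfold supratio in *.
  match goal with |- context [Lub_Rbar ?E] => destruct (Lub_Rbar_correct E) as [Hub _] end.
  specialize (Hub ((f x - f y) / (g x - g y))).
  rewrite <- Hfin in Hub. apply Hub. exists x, y. auto.
Qed.

Lemma supratio_increment f g x y : is_finite (supratio f g) -> 0 <= x -> x < y -> g x < g y ->
  f y - f x <= real (supratio f g) * (g y - g x).
Proof.
  intros Hfin Hx Hxy Hg.
  pose proof (supratio_ge f g y x Hfin ltac:(lra) Hx ltac:(lra)) as H.
  replace (f y - f x) with ((f y - f x) / (g y - g x) * (g y - g x)) by (field; lra).
  apply Rmult_le_compat_r; lra.
Qed.

Lemma supratio_nonneg f g : is_finite (supratio f g) -> f 0 <= f 1 -> g 0 < g 1 ->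
  0 <= real (supratio f g).
Proof.
  intros Hfin Hf Hg. eapply Rle_trans; [|apply (supratio_ge f g 1 0); auto; lra].
  apply Rmult_le_pos; [lra|]. left; apply Rinv_0_lt_compat; lra.
Qed.

(* Both extensions vanish at the origin, so for [x < 0 <= y] the increment is compared
   with the one from [0] to [y]. *)
Lemma ext_increment f g x y : is_finite (supratio f g) -> 0 <= real (supratio f g) ->
  f 0 = 0 -> g 0 = 0 -> (forall u v, 0 <= u -> u < v -> g u < g v) -> x < y ->
  ext0 f y - ext0 f x <= real (supratio f g) * (extup g y - extup g x).
Proof.
  intros Hfin HL Hf0 Hg0 Hg Hxy. destruct (Rle_dec 0 x) as [Hx|Hx].
  - rewrite (ext0_pos f x), (ext0_pos f y), (extup_pos g x), (extup_pos g y) by lra.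
    apply supratio_increment; auto.
  - rewrite (ext0_neg f x), (extup_neg g x) by lra. destruct (Rle_dec 0 y) as [Hy|Hy].
    + rewrite (ext0_pos f y), (extup_pos g y) by lra. destruct (Req_dec y 0) as [->|Hy0].
      * rewrite Hf0, Hg0. nra.
      * pose proof (Hg 0 y (Rle_refl 0) ltac:(lra)) as Hg0y.
        pose proof (supratio_increment f g 0 y Hfin (Rle_refl 0) ltac:(lra) Hg0y).
        rewrite Hf0, Hg0 in *. nra.
    + rewrite ext0_neg, extup_neg by lra. nra.
Qed.

Lemma supratio_reparam f g f' g' H : strict_increasing H -> H 0 = 0 ->
  (forall z, 0 <= z -> exists u, 0 <= u /\ H u = z) ->
  (forall u, 0 <= u -> f u = f' (H u) /\ g u = g' (H u)) ->
  supratio f g = supratio f' g'.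
Proof.
  intros Hinc H0 Hsurj Hfg. unfold supratio. apply Lub_Rbar_eqset. intro r.
  assert (Hnn : forall u, 0 <= u -> 0 <= H u).
  { intros u [Hu|<-]; [rewrite <- H0; left; apply Hinc, Hu | lra]. }
  split.
  - intros [u1 [u2 [Hu1 [Hu2 [Hne ->]]]]]. exists (H u1), (H u2).
    destruct (Hfg u1 Hu1) as [-> ->], (Hfg u2 Hu2) as [-> ->].
    repeat split; auto. intro E.
    destruct (Rtotal_order u1 u2) as [Hlt|[Heq|Hlt]]; auto; apply Hinc in Hlt; lra.
  - intros [z1 [z2 [Hz1 [Hz2 [Hne ->]]]]].
    destruct (Hsurj z1 Hz1) as [u1 [Hu1 <-]], (Hsurj z2 Hz2) as [u2 [Hu2 <-]].
    exists u1, u2. destruct (Hfg u1 Hu1) as [-> ->], (Hfg u2 Hu2) as [-> ->].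
    repeat split; auto. intros ->; auto.
Qed.

(** * Expanding maps and their inverses *)

Definition expanding (c : R) (F : R -> R) : Prop :=
  forall x y, x <= y -> c * (y - x) <= F y - F x.

Lemma Derive_ge_expanding (c : R) (F : R -> R) : (forall x, ex_derive F x) -> expanding c F ->
  forall x, c <= Derive F x.
Proof.
  intros Hd Hexp x. set (G := fun y => F y - c * y).
  assert (Hid : forall y, ex_derive (fun y => c * y) y)
    by (intro y; apply ex_derive_scal, ex_derive_id).
  assert (HG : forall y, ex_derive G y)
    by (intro y; apply (ex_derive_minus F (fun y => c * y)); auto).
  assert (Hinc : increasing G) by (intros y z Hyz; unfold G; specialize (Hexp y z Hyz); lra).
  pose proof (nonneg_derivative_0 G (fun y => ex_derive_Reals_0 G y (HG y)) Hinc x) as H.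
  rewrite (derive_pt_eq_0 _ _ (Derive G x)) in H
    by apply is_derive_Reals, Derive_correct, HG.
  unfold G in H. rewrite Derive_minus, Derive_scal, Derive_id in H; auto. lra.
Qed.

Lemma finv_spec f z : (exists u, 0 <= u /\ f u = z) -> 0 <= finv f z /\ f (finv f z) = z.
Proof. apply (epsilon_spec (inhabits 0) (fun u => 0 <= u /\ f u = z)). Qed.

Definition expanding_extension (c : R) (f : R -> R) : Prop :=
  0 < c /\ expanding c (extup f) /\ (forall x, continuous (extup f) x) /\ f 0 = 0.

Definition extup_inv (f : R -> R) (z : R) : R := if Rle_dec 0 z then finv f z else z.

Lemma extup_inv_neg f z : z < 0 -> extup_inv f z = z.
Proof. intro Hz. unfold extup_inv. destruct (Rle_dec 0 z); lra. Qed.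

Section ExpandingExtension.

Variables (c : R) (f : R -> R).
Hypothesis f_exp : expanding_extension c f.

Lemma extup_strict_increasing : strict_increasing (extup f).
Proof.
  destruct f_exp as [Hc [He _]]. intros x y Hxy. specialize (He x y (Rlt_le _ _ Hxy)). nra.
Qed.

Lemma expanding_strict_increasing u v : 0 <= u -> u < v -> f u < f v.
Proof.
  intros Hu Huv. rewrite <- (extup_pos f u), <- (extup_pos f v) by lra.
  apply extup_strict_increasing, Huv.
Qed.

Lemma expanding_lower_bound u : 0 <= u -> c * u <= f u.
Proof.
  destruct f_exp as [_ [He [_ H0]]]. intro Hu. specialize (He 0 u Hu).
  rewrite !extup_pos, H0 in He by lra. lra.
Qed.

Lemma expanding_nonneg u : 0 <= u -> 0 <= f u.
Proof.
  intro Hu. pose proof (expanding_lower_bound u Hu). destruct f_exp as [Hc _]. nra.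
Qed.

Lemma expanding_injective u v : 0 <= u -> 0 <= v -> f u = f v -> u = v.
Proof.
  intros Hu Hv E. destruct (Rtotal_order u v) as [H|[H|H]]; auto;
    apply expanding_strict_increasing in H; lra.
Qed.

Lemma expanding_surjective z : 0 <= z -> exists u, 0 <= u /\ f u = z.
Proof.
  destruct f_exp as [Hc [He [Hcont H0]]]. intro Hz.
  assert (Hb : z <= extup f (z / c)).
  { pose proof (expanding_lower_bound (z / c) ltac:(apply Rdiv_le_0_compat; lra)).
    rewrite extup_pos by (apply Rdiv_le_0_compat; lra).
    replace (c * (z / c)) with z in * by (field; lra). lra. }
  destruct (IVT_cor (fun x => extup f x - z) 0 (z / c)) as [u [Hu Hfu]].
  - intro x. apply continuity_pt_filterlim.
    apply (continuous_minus (extup f) (fun _ => z)); [apply Hcont | apply continuous_const].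
  - apply Rdiv_le_0_compat; lra.
  - rewrite extup_pos, H0 by lra. nra.
  - exists u. split; [lra|]. rewrite <- (extup_pos f u) by lra. lra.
Qed.

Lemma finv_expanding_r z : 0 <= z -> 0 <= finv f z /\ f (finv f z) = z.
Proof. intro Hz. apply finv_spec, expanding_surjective, Hz. Qed.

Lemma finv_expanding_l u : 0 <= u -> finv f (f u) = u.
Proof.
  intro Hu. destruct (finv_expanding_r (f u) (expanding_nonneg u Hu)) as [Hv E].
  apply expanding_injective; auto.
Qed.

Lemma finv_expanding_le z1 z2 : 0 <= z1 -> z1 <= z2 -> finv f z1 <= finv f z2.
Proof.
  intros Hz1 Hz12. destruct (finv_expanding_r z1 Hz1) as [H1 E1].
  destruct (finv_expanding_r z2 ltac:(lra)) as [H2 E2].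
  destruct (Rle_lt_dec (finv f z1) (finv f z2)) as [|Hlt]; auto.
  apply expanding_strict_increasing in Hlt; lra.
Qed.

Lemma extup_inv_nonneg z : 0 <= z -> 0 <= extup_inv f z.
Proof.
  intro Hz. unfold extup_inv. destruct (Rle_dec 0 z); [apply finv_expanding_r|]; lra.
Qed.

Lemma extup_inv_r z : extup f (extup_inv f z) = z.
Proof.
  unfold extup_inv. destruct (Rle_dec 0 z) as [Hz|Hz].
  - destruct (finv_expanding_r z Hz). rewrite extup_pos; auto.
  - rewrite extup_neg; lra.
Qed.

Lemma extup_inv_l u : extup_inv f (extup f u) = u.
Proof.
  unfold extup_inv. destruct (Rle_dec 0 u) as [Hu|Hu].
  - rewrite extup_pos by auto. pose proof (expanding_nonneg u Hu).
    destruct (Rle_dec 0 (f u)); [apply finv_expanding_l; auto | lra].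
  - rewrite extup_neg by lra. destruct (Rle_dec 0 u); lra.
Qed.

Lemma extup_inv_at_0 : extup_inv f 0 = 0.
Proof.
  destruct f_exp as [_ [_ [_ H0]]].
  rewrite <- H0 at 1. rewrite <- (extup_pos f 0) by lra. apply extup_inv_l.
Qed.

Lemma extup_inv_strict_increasing : strict_increasing (extup_inv f).
Proof.
  exact (inverse_strict_increasing _ _ extup_strict_increasing extup_inv_r).
Qed.

Lemma Ck_extup_inv k : (1 <= k)%nat -> Ck k (extup f) -> Ck k (extup_inv f).
Proof.
  intros Hk1 Hk. destruct k as [|k]; [lia|].
  apply (Ck_inverse (extup f)); auto using extup_strict_increasing, extup_inv_r, extup_inv_l.
  destruct f_exp as [Hc [He _]]. intro x.
  pose proof (Derive_ge_expanding c _ (Ck_ex_derive _ _ Hk1 Hk) He x). lra.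
Qed.

Lemma expanding_inCup : inCup f.
Proof.
  destruct f_exp as [Hc [He [Hcont H0]]]. split; [|split].
  - apply inC_intro with (extup f); auto using expanding_nonneg.
    + intros; symmetry; apply extup_pos; auto.
    + intros u1 u2 Hu1 [Hlt|<-]; [left; apply expanding_strict_increasing; auto | lra].
  - exact expanding_strict_increasing.
  - intro M. exists (Rmax (M / c) 0). intros u Hu.
    pose proof (Rmax_l (M / c) 0). pose proof (Rmax_r (M / c) 0).
    pose proof (expanding_lower_bound u ltac:(lra)).
    apply Rle_trans with (c * u); [|lra].
    replace M with (c * (M / c)) at 1 by (field; lra). apply Rmult_le_compat_l; lra.
Qed.

Lemma extup_inv_inCup : inCup (extup_inv f).
Proof.
  destruct f_exp as [Hc [He [Hcont H0]]].
  pose proof extup_inv_strict_increasing as Hinc.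
  assert (Hle := inverse_le _ _ extup_strict_increasing extup_inv_r).
  split; [|split].
  - apply inC_intro with (extup_inv f); auto.
    + exact (inverse_continuous _ _ extup_strict_increasing extup_inv_r extup_inv_l Hcont).
    + apply extup_inv_nonneg.
    + apply extup_inv_at_0.
  - intros u v _ Huv; apply Hinc, Huv.
  - intro M. exists (extup f (Rmax M 0)). intros u Hu.
    apply Hle in Hu. rewrite extup_inv_l in Hu. pose proof (Rmax_l M 0). lra.
Qed.

End ExpandingExtension.

Lemma inCupq_of_expanding q c f : expanding_extension c f -> Ck q (extup f) -> inCupq q f.
Proof. intros Hf Hq. split; [apply (expanding_inCup c), Hf | apply Ck_Cq, Hq]. Qed.

Lemma Derive_extup_pos c f : expanding_extension c f -> (forall x, ex_derive (extup f) x) ->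
  forall x, 0 < Derive (extup f) x.
Proof.
  intros [Hc [He _]] Hd x. pose proof (Derive_ge_expanding c _ Hd He x). lra.
Qed.

(** * The maps phi_i *)

Lemma INR_min_diff I i j : (j <= I)%nat ->
  INR (Nat.min I j) - INR (Nat.min i j) = INR (j - i).
Proof.
  intro Hj. rewrite Nat.min_r by auto. destruct (Compare_dec.le_lt_dec i j).
  - rewrite Nat.min_l, minus_INR by auto. ring.
  - rewrite Nat.min_r by lia. replace (j - i)%nat with 0%nat by lia. simpl; ring.
Qed.

Lemma phi_eq_phiI I psi i u : (i <= I)%nat ->
  phi I psi i u = phi I psi I u + sum1 I (fun j => 2 * INR (j - i) * psi j u).
Proof.
  intro Hi. unfold phi. rewrite !sum1_sum_list.
  replace (sum_list (seq 1 I) (fun j => 2 * INR (Nat.min i j) * psi j u)) with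
    (sum_list (seq 1 I) (fun j => 2 * INR (Nat.min I j) * psi j u) -
     sum_list (seq 1 I) (fun j => 2 * INR (j - i) * psi j u)); [ring|].
  rewrite <- sum_list_minus. apply sum_list_ext. intros j Hj. apply in_seq1 in Hj.
  rewrite <- (INR_min_diff I i j) by lia. ring.
Qed.

Lemma phi_index_0 I psi u : phi I psi 0 u = u.
Proof. unfold phi. rewrite sum1_sum_list, sum_list_zero; [ring | intros; simpl; ring]. Qed.

Lemma extup_phi I psi i u :
  extup (phi I psi i) u = u - sum1 I (fun j => 2 * INR (Nat.min i j) * ext0 (psi j) u).
Proof.
  destruct (Rle_dec 0 u) as [Hu|Hu].
  - rewrite extup_pos by auto. unfold phi. rewrite !sum1_sum_list.
    f_equal. apply sum_list_ext. intros; rewrite ext0_pos; auto.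
  - rewrite extup_neg by lra. rewrite sum1_sum_list, sum_list_zero; [ring|].
    intros; rewrite ext0_neg by lra; ring.
Qed.

Lemma Ck_extup_phi q I psi i : inCqI q I psi -> Ck q (extup (phi I psi i)).
Proof.
  intro Hq. apply Ck_ext with
    (fun u => u + -1 * sum_list (seq 1 I) (fun j => 2 * INR (Nat.min i j) * ext0 (psi j) u)).
  { intro u. rewrite extup_phi, sum1_sum_list. ring. }
  apply Ck_plus; [apply Ck_id|]. apply Ck_scal.
  apply (Ck_sum_list q (seq 1 I) (fun j u => 2 * INR (Nat.min i j) * ext0 (psi j) u)).
  intros j Hj. apply Ck_scal, Ck_Cq, (Hq j (in_seq1 _ _ Hj)).
Qed.

Definition psi_lip (I : nat) (psi : nat -> R -> R) (j : nat) : R :=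
  real (supratio (psi j) (phi I psi j)).

Definition phi_rate (I : nat) (psi : nat -> R -> R) : R :=
  1 - 2 * sum1 I (fun j => INR j * psi_lip I psi j).

Section Phi.

Variables (I : nat) (psi : nat -> R -> R).
Hypotheses (psi_C : inCI I psi) (phiI_up : inCup (phi I psi I))
  (psi_small : weighted_small I (fun i => supratio (psi i) (phi I psi i))).

Lemma phi_at_0 i : phi I psi i 0 = 0.
Proof.
  unfold phi. rewrite sum1_sum_list, sum_list_zero; [ring|].
  intros j Hj. destruct (psi_C j (in_seq1 _ _ Hj)) as [_ [_ [H0 _]]]. rewrite H0; ring.
Qed.

Lemma phi_strict_increasing i : (i <= I)%nat ->
  forall u v, 0 <= u -> u < v -> phi I psi i u < phi I psi i v.
Proof.
  intros Hi u v Hu Huv. rewrite !(phi_eq_phiI I psi i) by auto.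
  destruct phiI_up as [_ [HI _]]. specialize (HI u v Hu Huv).
  enough (sum1 I (fun j => 2 * INR (j - i) * psi j u) <=
          sum1 I (fun j => 2 * INR (j - i) * psi j v)) by lra.
  apply sum_list_le. intros j Hj.
  destruct (psi_C j (in_seq1 _ _ Hj)) as [_ [_ [_ Hmono]]].
  specialize (Hmono u v Hu (Rlt_le _ _ Huv)). pose proof (pos_INR (j - i)). nra.
Qed.

Lemma psi_lip_nonneg j : (1 <= j <= I)%nat -> 0 <= psi_lip I psi j.
Proof.
  intro Hj. apply supratio_nonneg.
  - apply (proj1 psi_small j Hj).
  - destruct (psi_C j Hj) as [_ [_ [_ Hmono]]]. apply Hmono; lra.
  - apply phi_strict_increasing; lra || lia.
Qed.

Lemma extup_phi_increment_le i x y : x <= y ->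
  extup (phi I psi i) y - extup (phi I psi i) x <= y - x.
Proof.
  intro Hxy. rewrite !extup_phi.
  enough (sum1 I (fun j => 2 * INR (Nat.min i j) * ext0 (psi j) x) <=
          sum1 I (fun j => 2 * INR (Nat.min i j) * ext0 (psi j) y)) by lra.
  apply sum_list_le. intros j Hj.
  pose proof (ext0_le _ (psi_C j (in_seq1 _ _ Hj)) x y Hxy).
  pose proof (pos_INR (Nat.min i j)). nra.
Qed.

(* Each [psi_j] grows at most at rate [psi_lip j] relative to [phi_j], which grows at most
   at rate 1; the weights [min i j <= j] then give rate [phi_rate] for [phi_i]. *)
Lemma phi_expanding i : expanding (phi_rate I psi) (extup (phi I psi i)).
Proof.
  intros x y [Hxy|<-]; [|lra]. rewrite !extup_phi. unfold phi_rate.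
  enough (sum1 I (fun j => 2 * INR (Nat.min i j) * ext0 (psi j) y) -
          sum1 I (fun j => 2 * INR (Nat.min i j) * ext0 (psi j) x) <=
          sum1 I (fun j => 2 * (y - x) * (INR j * psi_lip I psi j))).
  { rewrite !sum1_sum_list in *. rewrite sum_list_scal in H. nra. }
  rewrite !sum1_sum_list, <- sum_list_minus. apply sum_list_le.
  intros j Hj. apply in_seq1 in Hj.
  assert (Hinc : ext0 (psi j) y - ext0 (psi j) x <=
                 psi_lip I psi j * (extup (phi I psi j) y - extup (phi I psi j) x)).
  { destruct (psi_C j Hj) as [_ [_ [H0 _]]].
    apply ext_increment; auto.
    - apply (proj1 psi_small j Hj).
    - apply (psi_lip_nonneg j Hj).
    - apply phi_at_0.
    - apply phi_strict_increasing; lia. }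
  pose proof (ext0_le _ (psi_C j Hj) x y (Rlt_le _ _ Hxy)).
  pose proof (extup_phi_increment_le j x y (Rlt_le _ _ Hxy)).
  pose proof (psi_lip_nonneg j Hj).
  assert (INR (Nat.min i j) <= INR j) by (apply le_INR; lia).
  pose proof (pos_INR (Nat.min i j)).
  assert (ext0 (psi j) y - ext0 (psi j) x <= psi_lip I psi j * (y - x)) by nra.
  nra.
Qed.

Lemma phi_rate_pos : 0 < phi_rate I psi.
Proof. destruct psi_small as [_ H]. unfold phi_rate, psi_lip. lra. Qed.

End Phi.

Lemma phi_expanding_extension q I psi i : (1 <= q)%nat -> inDq q I psi ->
  expanding_extension (phi_rate I psi) (phi I psi i).
Proof.
  intros Hq [[HC [Hup Hsmall]] HCq]. repeat split.
  - apply phi_rate_pos; auto.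
  - apply phi_expanding; auto.
  - apply (Ck_continuous q), Ck_extup_phi, HCq.
  - apply phi_at_0, HC.
Qed.

(** * The maps gamma_i *)

Lemma Gam_stable I psib n k z : (k <= n)%nat -> Gam I psib n k z = Gam I psib k k z.
Proof.
  revert k; induction n as [|n IH]; intros k Hk.
  - replace k with 0%nat by lia. reflexivity.
  - destruct (Nat.eq_dec k (S n)) as [->|Hne]; [reflexivity|].
    simpl. replace (Nat.leb k n) with true by (symmetry; apply Nat.leb_le; lia).
    apply IH; lia.
Qed.

Lemma gamma_I I psib z : gamma I psib I z = z.
Proof. unfold gamma. rewrite Nat.sub_diag. reflexivity. Qed.

Lemma gamma_eq I psib i z : (i <= I)%nat ->
  gamma I psib i z = z + sum1 I (fun j => 2 * INR (j - i) * psib j (gamma I psib j z)).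
Proof.
  intro Hi. unfold gamma. rewrite sum1_sum_list.
  remember (I - i)%nat as n eqn:Hn. destruct n as [|m].
  - simpl. rewrite sum_list_zero; [ring|]. intros j Hj; apply in_seq1 in Hj.
    replace (j - i)%nat with 0%nat by lia. simpl; ring.
  - change (Gam I psib (S m) (S m) z) with
      (if Nat.leb (S m) m then Gam I psib m (S m) z else z + sum_list (seq 0 (S m))
        (fun k' => 2 * INR (S m - k') * psib (I - k')%nat (Gam I psib m k' z))).
    replace (Nat.leb (S m) m) with false by (symmetry; apply Nat.leb_gt; lia).
    f_equal.
    set (H := fun j => 2 * INR (j - i) * psib j (Gam I psib (I - j) (I - j) z)).
    rewrite (sum_list_ext _ _ (fun k' => H (I - k')%nat)).
    + rewrite sum_list_seq_rev by lia. unfold H. apply sum_list_ext.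
      intros j Hj; apply in_seq1 in Hj.
      destruct (Nat.ltb_spec (I - S m) j); auto.
      replace (j - i)%nat with 0%nat by lia. simpl; ring.
    + intros k' Hk'. apply in_seq in Hk'. unfold H.
      replace (I - (I - k'))%nat with k' by lia.
      replace (I - k' - i)%nat with (S m - k')%nat by lia.
      rewrite (Gam_stable I psib m k') by lia. reflexivity.
Qed.

Lemma nat_down_ind I (P : nat -> Prop) :
  (forall i, (i <= I)%nat -> (forall j, (i < j <= I)%nat -> P j) -> P i) ->
  forall i, (i <= I)%nat -> P i.
Proof.
  intro H. assert (Hn : forall n i, (I - i <= n)%nat -> (i <= I)%nat -> P i).
  { induction n as [|n IH]; intros i Hn Hi; apply H; auto; intros j Hj; [lia|].
    apply IH; lia. }
  intros i Hi. exact (Hn (I - i)%nat i (le_n _) Hi).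
Qed.

Lemma gamma_feq I p1 p2 : feq I p1 p2 ->
  (forall j z, (j <= I)%nat -> 0 <= z -> 0 <= gamma I p1 j z) ->
  forall i, (i <= I)%nat -> forall z, 0 <= z -> gamma I p1 i z = gamma I p2 i z.
Proof.
  intros Hf Hnn.
  apply (nat_down_ind I (fun i => forall z, 0 <= z -> gamma I p1 i z = gamma I p2 i z)).
  intros i Hi IH z Hz. rewrite !gamma_eq by auto. f_equal. apply sum_list_ext.
  intros j Hj; apply in_seq1 in Hj. destruct (Compare_dec.le_lt_dec j i).
  - replace (j - i)%nat with 0%nat by lia. simpl; ring.
  - rewrite <- IH, Hf by (auto; lia || apply Hnn; auto; lia). reflexivity.
Qed.

Section Gamma.

Variables (q I : nat) (psib : nat -> R -> R).
Hypotheses (psib_C : inCI I psib) (psib_Cq : inCqI q I psib).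

Lemma extup_gamma_eq i : (i <= I)%nat ->
  (forall j z, (i < j <= I)%nat -> 0 <= z -> 0 <= gamma I psib j z) ->
  forall z, extup (gamma I psib i) z =
    z + sum1 I (fun j => 2 * INR (j - i) * ext0 (psib j) (extup (gamma I psib j) z)).
Proof.
  intros Hi Hnn z. destruct (Rle_dec 0 z) as [Hz|Hz].
  - rewrite extup_pos, gamma_eq by auto. f_equal. apply sum_list_ext.
    intros j Hj; apply in_seq1 in Hj. destruct (Compare_dec.le_lt_dec j i).
    + replace (j - i)%nat with 0%nat by lia. simpl; ring.
    + rewrite extup_pos, ext0_pos by first [assumption | apply Hnn; [lia | assumption]].
      reflexivity.
  - rewrite extup_neg by lra. rewrite sum1_sum_list, sum_list_zero; [ring|].
    intros j _. rewrite extup_neg, ext0_neg by lra. ring.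
Qed.

Lemma Ck_extup_gamma_step i : (i <= I)%nat ->
  (forall j z, (i < j <= I)%nat -> 0 <= z -> 0 <= gamma I psib j z) ->
  (forall j, (i < j <= I)%nat -> Ck q (extup (gamma I psib j))) ->
  Ck q (extup (gamma I psib i)).
Proof.
  intros Hi Hnn Hk.
  apply Ck_ext with (fun z => z + sum_list (seq 1 I)
      (fun j => 2 * INR (j - i) * ext0 (psib j) (extup (gamma I psib j) z)));
    [intro z; rewrite extup_gamma_eq; auto|].
  apply Ck_plus; [apply Ck_id|].
  apply (Ck_sum_list q (seq 1 I)
    (fun j z => 2 * INR (j - i) * ext0 (psib j) (extup (gamma I psib j) z))).
  intros j Hj; apply in_seq1 in Hj. destruct (Compare_dec.le_lt_dec j i).
  - apply Ck_ext with (fun _ => 0); [|apply Ck_const].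
    intro; replace (j - i)%nat with 0%nat by lia. simpl; ring.
  - apply Ck_scal, Ck_comp; [apply Ck_Cq, psib_Cq, Hj | apply Hk; lia].
Qed.

Lemma gamma_regular i : (i <= I)%nat ->
  expanding 1 (extup (gamma I psib i)) /\ gamma I psib i 0 = 0 /\
  Ck q (extup (gamma I psib i)).
Proof.
  revert i. apply nat_down_ind. intros i Hi IH.
  assert (Hnn : forall j z, (i < j <= I)%nat -> 0 <= z -> 0 <= gamma I psib j z).
  { intros j z Hj Hz. destruct (IH j Hj) as [Hexp [H0 _]].
    specialize (Hexp 0 z Hz). rewrite !extup_pos, H0 in Hexp by lra. lra. }
  pose proof (extup_gamma_eq i Hi Hnn) as E.
  split; [|split].
  - intros x y Hxy. rewrite !E.
    enough (sum1 I (fun j => 2 * INR (j - i) * ext0 (psib j) (extup (gamma I psib j) x)) <=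
            sum1 I (fun j => 2 * INR (j - i) * ext0 (psib j) (extup (gamma I psib j) y)))
      by lra.
    apply sum_list_le. intros j Hj; apply in_seq1 in Hj.
    destruct (Compare_dec.le_lt_dec j i).
    + replace (j - i)%nat with 0%nat by lia. simpl; lra.
    + destruct (IH j) as [Hexp _]; [lia|]. specialize (Hexp x y Hxy).
      pose proof (ext0_le _ (psib_C j Hj) (extup (gamma I psib j) x)
                    (extup (gamma I psib j) y) ltac:(lra)).
      pose proof (pos_INR (j - i)). nra.
  - pose proof (E 0) as E0. rewrite extup_pos in E0 by lra.
    rewrite E0, sum1_sum_list, sum_list_zero; [ring|].
    intros j Hj. apply in_seq1 in Hj. destruct (Compare_dec.le_lt_dec j i).
    + replace (j - i)%nat with 0%nat by lia. simpl; ring.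
    + destruct (IH j) as [_ [H0 _]]; [lia|].
      destruct (psib_C j Hj) as [_ [_ [Hpsi0 _]]].
      rewrite extup_pos, H0, ext0_pos, Hpsi0 by lra. ring.
  - apply Ck_extup_gamma_step; auto. intros j Hj. apply IH, Hj.
Qed.

Lemma Ck_extup_gamma i : (i <= I)%nat -> Ck q (extup (gamma I psib i)).
Proof. intro Hi. apply (gamma_regular i Hi). Qed.

Lemma gamma_expanding_extension i : (1 <= q)%nat -> (i <= I)%nat ->
  expanding_extension 1 (gamma I psib i).
Proof.
  intros Hq Hi. destruct (gamma_regular i Hi) as [Hexp [H0 Hk]].
  repeat split; auto; [lra | apply (Ck_continuous q), Hk].
Qed.

End Gamma.

(** * Upsilon maps D^q into Dbar^q *)

Section Upsilon.

Variables (q I : nat) (psi : nat -> R -> R).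
Hypotheses (hq : (1 <= q)%nat) (psi_Dq : inDq q I psi).

Let phi_ext i : expanding_extension (phi_rate I psi) (phi I psi i) :=
  phi_expanding_extension q I psi i hq psi_Dq.

Lemma Ups_phi i u : 0 <= u -> Ups I psi i (phi I psi i u) = psi i u.
Proof. intro Hu. unfold Ups. rewrite (finv_expanding_l _ _ (phi_ext i)) by auto. reflexivity. Qed.

Lemma ext0_Ups i z : ext0 (Ups I psi i) z = ext0 (psi i) (extup_inv (phi I psi i) z).
Proof.
  unfold extup_inv. destruct (Rle_dec 0 z) as [Hz|Hz].
  - rewrite !ext0_pos by (auto; apply (finv_expanding_r _ _ (phi_ext i) z Hz)). reflexivity.
  - rewrite !ext0_neg by lra. reflexivity.
Qed.

Lemma Ups_inCq i : (1 <= i <= I)%nat -> inCq q (Ups I psi i).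
Proof.
  intro Hi. pose proof psi_Dq as [[HC _] HCq]. destruct (HC i Hi) as [_ [Hnn [H0 Hmono]]].
  pose proof (phi_ext i) as Hphi. apply inCq_intro.
  - apply Ck_ext with (fun z => ext0 (psi i) (extup_inv (phi I psi i) z));
      [intro; symmetry; apply ext0_Ups|].
    apply Ck_comp; [apply Ck_Cq, HCq, Hi|].
    apply (Ck_extup_inv _ _ Hphi); [exact hq | apply Ck_extup_phi, HCq].
  - rewrite <- (phi_at_0 I psi HC i) at 1. rewrite Ups_phi by lra. exact H0.
  - intros z Hz. apply Hnn, (finv_expanding_r _ _ Hphi z Hz).
  - intros z1 z2 H1 H2. apply Hmono; [apply (finv_expanding_r _ _ Hphi z1 H1)|].
    apply (finv_expanding_le _ _ Hphi); auto.
Qed.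

Lemma supratio_Ups i :
  supratio (psi i) (phi I psi i) = supratio (Ups I psi i) (fun z => z).
Proof.
  pose proof (phi_ext i) as Hphi.
  apply supratio_reparam with (extup (phi I psi i)).
  - exact (extup_strict_increasing _ _ Hphi).
  - rewrite extup_pos by lra. apply Hphi.
  - intros z Hz. destruct (expanding_surjective _ _ Hphi z Hz) as [u [Hu E]].
    exists u. rewrite extup_pos; auto.
  - intros u Hu. rewrite extup_pos by auto. split; [symmetry; apply Ups_phi, Hu | reflexivity].
Qed.

Lemma Ups_inDbarq : inDbarq q I (Ups I psi).
Proof.
  pose proof psi_Dq as [[_ [_ [Hfin Hsum]]] _].
  split; [split; [|split]|].
  - intros i Hi; apply Ups_inCq, Hi.
  - intros i Hi. rewrite <- supratio_Ups; auto.
  - rewrite sum1_sum_list in *. erewrite sum_list_ext; [apply Hsum|].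
    intros i _. simpl. rewrite supratio_Ups; auto.
  - intros i Hi; apply Ups_inCq, Hi.
Qed.

Lemma phi_gamma_Ups i : (i <= I)%nat ->
  forall u, 0 <= u -> phi I psi i u = gamma I (Ups I psi) i (phi I psi I u).
Proof.
  revert i. apply (nat_down_ind I (fun i =>
    forall u, 0 <= u -> phi I psi i u = gamma I (Ups I psi) i (phi I psi I u))).
  intros i Hi IH u Hu.
  rewrite gamma_eq, phi_eq_phiI by auto. f_equal. apply sum_list_ext.
  intros j Hj; apply in_seq1 in Hj. destruct (Compare_dec.le_lt_dec j i).
  - replace (j - i)%nat with 0%nat by lia. simpl; ring.
  - rewrite <- IH, Ups_phi by (auto; lia). reflexivity.
Qed.

End Upsilon.

Lemma Ups_injective q I psi1 psi2 : (1 <= q)%nat -> inDq q I psi1 -> inDq q I psi2 ->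
  feq I (Ups I psi1) (Ups I psi2) -> feq I psi1 psi2.
Proof.
  intros Hq H1 H2 Hf i Hi u Hu.
  destruct (Ups_inDbarq q I psi1 Hq H1) as [[HC _] HCq].
  pose proof (gamma_expanding_extension q I (Ups I psi1) HC HCq) as Hg.
  assert (Hfeq := gamma_feq I _ _ Hf
    (fun j z Hj Hz => expanding_nonneg _ _ (Hg j Hq Hj) z Hz)).
  assert (Hphi : forall n psi, inDq q I psi -> 0 <= phi I psi n u).
  { intros n psi Hpsi.
    exact (expanding_nonneg _ _ (phi_expanding_extension q I psi n Hq Hpsi) u Hu). }
  assert (EI : phi I psi1 I u = phi I psi2 I u).
  { apply (expanding_injective _ _ (Hg 0%nat Hq ltac:(lia))); auto.
    rewrite <- (phi_gamma_Ups q I psi1), Hfeq, <- (phi_gamma_Ups q I psi2), !phi_index_0;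
      auto; lia. }
  assert (Ei : phi I psi1 i u = phi I psi2 i u).
  { rewrite (phi_gamma_Ups q I psi1), (phi_gamma_Ups q I psi2), EI by (auto; lia).
    apply Hfeq; auto; lia. }
  rewrite <- (Ups_phi q I psi1), <- (Ups_phi q I psi2), Ei by auto.
  apply Hf; auto.
Qed.

(** * Upsilon is onto Dbar^q *)

Definition Ups_preimage (I : nat) (psib : nat -> R -> R) (i : nat) (u : R) : R :=
  ext0 (psib i) (extup (gamma I psib i) (extup_inv (gamma I psib 0) u)).

Section UpsilonSurjective.

Variables (q I : nat) (psib : nat -> R -> R).
Hypotheses (hq : (1 <= q)%nat) (psib_Dq : inDbarq q I psib).

Let psib_C : inCI I psib := proj1 (proj1 psib_Dq).
Let psib_Cq : inCqI q I psib := proj2 psib_Dq.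
Let gamma_ext i (Hi : (i <= I)%nat) : expanding_extension 1 (gamma I psib i) :=
  gamma_expanding_extension q I psib psib_C psib_Cq i hq Hi.
Let K := extup_inv (gamma I psib 0).
Let psi := Ups_preimage I psib.

Lemma gamma_0_ext : expanding_extension 1 (gamma I psib 0).
Proof. apply gamma_ext; lia. Qed.

Lemma Ups_preimage_pos i u : (i <= I)%nat -> 0 <= u ->
  psi i u = psib i (gamma I psib i (K u)).
Proof.
  intros Hi Hu. pose proof (extup_inv_nonneg _ _ gamma_0_ext u Hu).
  pose proof (expanding_nonneg _ _ (gamma_ext i Hi) (K u) H).
  unfold psi, Ups_preimage. fold K. rewrite extup_pos, ext0_pos by auto. reflexivity.
Qed.

Lemma Ups_preimage_neg i u : u < 0 -> psi i u = 0.
Proof.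
  intro Hu. unfold psi, Ups_preimage.
  rewrite extup_inv_neg, extup_neg, ext0_neg by lra. reflexivity.
Qed.

Lemma phi_Ups_preimage i u : (i <= I)%nat ->
  phi I psi i u = extup (gamma I psib i) (K u).
Proof.
  intro Hi. destruct (Rle_dec 0 u) as [Hu|Hu].
  - assert (HK := extup_inv_nonneg _ _ gamma_0_ext u Hu). fold K in HK.
    rewrite extup_pos by auto. unfold phi.
    rewrite <- (extup_inv_r _ _ gamma_0_ext u) at 1. fold K.
    rewrite extup_pos, (gamma_eq I psib 0), (gamma_eq I psib i) by (auto; lia).
    rewrite !sum1_sum_list.
    enough (sum_list (seq 1 I) (fun j => 2 * INR (j - 0) * psib j (gamma I psib j (K u))) -
            sum_list (seq 1 I) (fun j => 2 * INR (Nat.min i j) * psi j u) =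
            sum_list (seq 1 I) (fun j => 2 * INR (j - i) * psib j (gamma I psib j (K u))))
      by lra.
    rewrite <- sum_list_minus. apply sum_list_ext. intros j Hj; apply in_seq1 in Hj.
    rewrite Ups_preimage_pos, <- (INR_min_diff I i j), Nat.sub_0_r, (Nat.min_r I j)
      by (auto; lia).
    ring.
  - assert (HK : K u = u) by (apply extup_inv_neg; lra).
    rewrite HK, extup_neg by lra. unfold phi.
    rewrite sum1_sum_list, sum_list_zero; [ring|].
    intros j _. rewrite Ups_preimage_neg by lra. ring.
Qed.

Lemma phi_Ups_preimage_strict_increasing i : (i <= I)%nat -> strict_increasing (phi I psi i).
Proof.
  intros Hi x y Hxy. rewrite !phi_Ups_preimage by auto.
  apply (extup_strict_increasing _ _ (gamma_ext i Hi)).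
  apply (extup_inv_strict_increasing _ _ gamma_0_ext), Hxy.
Qed.

Lemma phi_Ups_preimage_surjective i : (i <= I)%nat ->
  forall z, 0 <= z -> exists u, 0 <= u /\ phi I psi i u = z.
Proof.
  intros Hi z Hz. destruct (expanding_surjective _ _ (gamma_ext i Hi) z Hz) as [v [Hv E]].
  exists (gamma I psib 0 v). split; [apply (expanding_nonneg _ _ gamma_0_ext), Hv|].
  rewrite phi_Ups_preimage by auto. unfold K.
  rewrite <- (extup_pos (gamma I psib 0) v), (extup_inv_l _ _ gamma_0_ext), extup_pos by auto.
  exact E.
Qed.

Lemma Ups_preimage_le i x y : (1 <= i <= I)%nat -> x <= y -> psi i x <= psi i y.
Proof.
  intros Hi Hxy. unfold psi, Ups_preimage; fold K. apply (ext0_le _ (psib_C i Hi)).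
  assert (HK : K x <= K y)
    by exact (inverse_le _ _ (extup_strict_increasing _ _ gamma_0_ext)
                (extup_inv_r _ _ gamma_0_ext) x y Hxy).
  destruct HK as [HK|HK]; [|rewrite HK; lra].
  left. apply (extup_strict_increasing _ _ (gamma_ext i ltac:(lia))), HK.
Qed.

Lemma Ups_preimage_inCq i : (1 <= i <= I)%nat -> inCq q (psi i).
Proof.
  intro Hi. destruct (psib_C i Hi) as [_ [Hnn [H0 _]]].
  assert (HK0 : K 0 = 0) by apply (extup_inv_at_0 _ _ gamma_0_ext).
  apply inCq_intro.
  - apply Ck_ext with (psi i).
    + intro u. destruct (Rle_dec 0 u) as [Hu|Hu]; [symmetry; apply ext0_pos, Hu|].
      rewrite ext0_neg, Ups_preimage_neg by lra. reflexivity.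
    + unfold psi, Ups_preimage. apply Ck_comp; [apply Ck_Cq, psib_Cq, Hi|].
      apply Ck_comp; [apply (Ck_extup_gamma q I psib psib_C psib_Cq); lia|].
      apply (Ck_extup_inv _ _ gamma_0_ext _ hq), (Ck_extup_gamma q I psib psib_C psib_Cq); lia.
  - rewrite Ups_preimage_pos, HK0 by (lia || lra).
    destruct (gamma_ext i ltac:(lia)) as [_ [_ [_ ->]]]. exact H0.
  - intros u Hu. rewrite Ups_preimage_pos by (lia || auto). apply Hnn.
    apply (expanding_nonneg _ _ (gamma_ext i ltac:(lia))), (extup_inv_nonneg _ _ gamma_0_ext), Hu.
  - intros u1 u2 _ Hu. apply Ups_preimage_le; auto.
Qed.

Lemma phiI_Ups_preimage : phi I psi I = K.
Proof.
  apply functional_extensionality; intro u. rewrite phi_Ups_preimage by lia.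
  unfold extup. destruct (Rle_dec 0 (K u)); [apply gamma_I | reflexivity].
Qed.

Lemma supratio_Ups_preimage i : (1 <= i <= I)%nat ->
  supratio (psi i) (phi I psi i) = supratio (psib i) (fun z => z).
Proof.
  intro Hi. apply supratio_reparam with (phi I psi i).
  - apply phi_Ups_preimage_strict_increasing; lia.
  - rewrite phi_Ups_preimage by lia. unfold K.
    rewrite (extup_inv_at_0 _ _ gamma_0_ext), extup_pos by lra.
    destruct (gamma_ext i ltac:(lia)) as [_ [_ [_ H0]]]. exact H0.
  - apply phi_Ups_preimage_surjective; lia.
  - intros u Hu. split; [|reflexivity].
    pose proof (extup_inv_nonneg _ _ gamma_0_ext u Hu).
    rewrite Ups_preimage_pos, phi_Ups_preimage, extup_pos by (auto; lia). reflexivity.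
Qed.

Lemma Ups_preimage_inDq : inDq q I psi.
Proof.
  pose proof psib_Dq as [[_ [Hfin Hsum]] _].
  split; [split; [|split]|].
  - intros i Hi. apply (Ups_preimage_inCq i Hi).
  - rewrite phiI_Ups_preimage. apply (extup_inv_inCup _ _ gamma_0_ext).
  - split.
    + intros i Hi. rewrite supratio_Ups_preimage; auto.
    + rewrite sum1_sum_list in *. erewrite sum_list_ext; [apply Hsum|].
      intros i Hi; apply in_seq1 in Hi. simpl. rewrite supratio_Ups_preimage; auto.
  - intros i Hi. apply Ups_preimage_inCq, Hi.
Qed.

Lemma Ups_Ups_preimage : feq I (Ups I psi) psib.
Proof.
  intros i Hi z Hz. unfold Ups.
  destruct (finv_spec _ z (phi_Ups_preimage_surjective i ltac:(lia) z Hz)) as [Hw E].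
  set (w := finv (phi I psi i) z) in *.
  pose proof (extup_inv_nonneg _ _ gamma_0_ext w Hw).
  rewrite phi_Ups_preimage, extup_pos in E by (auto; lia).
  rewrite Ups_preimage_pos, E by (auto; lia). reflexivity.
Qed.

End UpsilonSurjective.

Lemma Ups_surjective q I psib : (1 <= q)%nat -> inDbarq q I psib ->
  exists psi, inDq q I psi /\ feq I (Ups I psi) psib.
Proof.
  intros Hq Hb. exists (Ups_preimage I psib).
  split; [apply Ups_preimage_inDq | apply (Ups_Ups_preimage q)]; auto.
Qed.

Theorem lemma6p2 (I q : nat) (hq : (1 <= q)%nat) :
  (* (a) *)
  (forall psi, inDq q I psi ->
     forall i, (1 <= i <= I)%nat ->
       inCupq q (phi I psi i) /\
       (forall u, 0 <= u -> 0 < Derive (extup (phi I psi i)) u)) /\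
  (* (b) *)
  (forall psib, inDbarq q I psib ->
     (forall i, (i <= I)%nat -> inCupq q (gamma I psib i)) /\
     (forall z, 0 <= z -> 0 < Derive (extup (gamma I psib 0)) z)) /\
  (* (c) Upsilon is a bijection D^q -> Dbar^q *)
  ((forall psi, inDq q I psi -> inDbarq q I (Ups I psi)) /\
   (forall psi1 psi2, inDq q I psi1 -> inDq q I psi2 ->
      feq I (Ups I psi1) (Ups I psi2) -> feq I psi1 psi2) /\
   (forall psib, inDbarq q I psib ->
      exists psi, inDq q I psi /\ feq I (Ups I psi) psib)).
Proof.
  split; [|split; [|split; [|split]]].
  - intros psi Hpsi i _.
    pose proof (phi_expanding_extension q I psi i hq Hpsi) as Hphi.
    pose proof (Ck_extup_phi q I psi i (proj2 Hpsi)) as Hk.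
    split; [exact (inCupq_of_expanding q _ _ Hphi Hk)|].
    intros u _. exact (Derive_extup_pos _ _ Hphi (Ck_ex_derive q _ hq Hk) u).
  - intros psib [[HC _] HCq].
    pose proof (gamma_expanding_extension q I psib HC HCq) as Hg.
    pose proof (Ck_extup_gamma q I psib HC HCq) as Hk.
    split.
    + intros i Hi. exact (inCupq_of_expanding q _ _ (Hg i hq Hi) (Hk i Hi)).
    + intros z _. exact (Derive_extup_pos _ _ (Hg 0%nat hq (Nat.le_0_l I))
                           (Ck_ex_derive q _ hq (Hk 0%nat (Nat.le_0_l I))) z).
  - intros psi. apply Ups_inDbarq, hq.
  - intros psi1 psi2. apply Ups_injective, hq.
  - intros psib. apply Ups_surjective, hq.
Qed.
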